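(* Let $X$ and $Y$ be Banach spaces such that $X$ coarsely Lipschitz embeds into $Y$. Then $\mathcal F(X)$ is crudely finitely representable in $\mathcal F(Y)$.
   Context: $X$ coarsely Lipschitz embeds into $Y$ if there are a map $f\colon X\to Y$ and constants $A,B>0$, $C\geq 0$ such that $A\|x-y\|-C\leq\|f(x)-f(y)\|\leq B\|x-y\|+C$ for all $x,y\in X$. A Banach space $E_0$ is crudely finitely representable in a Banach space $W$ if there is $\lambda\geq1$ such that for every finite-dimensional subspace $E$ of $E_0$ and every $\varepsilon>0$ there is a finite-dimensional subspace $F$ of $W$ with Banach–Mazur distance $d(E,F)\leq\lambda+\varepsilon$. For a Banach space $Z$ (pointed at $0$), $\mathrm{Lip}_0(Z)$ is the Banach space of real Lipschitz functions vanishing at $0$ normed by the Lipschitz constant, and $\mathcal F(Z)=\overline{\mathrm{span}}\{\delta(x):x\in Z\}\subset\mathrm{Lip}_0(Z)^*$, $\delta(x)$ being evaluation at $x$. *)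

From HB Require Import structures.
From mathcomp Require Import all_boot all_order all_algebra.
From mathcomp Require Import all_classical all_reals all_analysis.
Import Order.TTheory GRing.Theory Num.Theory.
Import numFieldNormedType.Exports.

Set Implicit Arguments.
Unset Strict Implicit.
Unset Printing Implicit Defensive.

Local Open Scope classical_set_scope.
Local Open Scope ring_scope.

Section LipFree.
Variable R : realType.

Definition lip_bound (V : normedModType R) (f : V -> R) (L : R) : Prop :=
  forall x y : V, `|f x - f y| <= L * `|x - y|.

Definition Lip0 (V : normedModType R) : Type :=
  {f : V -> R | f 0 = 0 /\ exists L, lip_bound f L}.

(* dual (operator) norm of a functional on Lip_0(V), Lip_0(V) being normed by
   the Lipschitz constant:  inf { C >= 0 : |phi f| <= C * L whenever L is a
   Lipschitz bound of f }  (+oo if no such C). *)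
Definition dnorm (V : normedModType R) (phi : Lip0 V -> R) : \bar R :=
  ereal_inf (EFin @` [set C : R | 0 <= C /\
     forall (f : Lip0 V) (L : R), 0 <= L -> lip_bound (sval f) L ->
       `|phi f| <= C * L]).

Definition span_delta (V : normedModType R) : set (Lip0 V -> R) :=
  [set mu | exists (n : nat) (a : 'I_n -> R) (x : 'I_n -> V),
     mu = fun f => \sum_(i < n) a i * sval f (x i)].

(* F(V): the norm closure of span{delta(x)} in Lip_0(V)^* *)
Definition Free (V : normedModType R) : set (Lip0 V -> R) :=
  [set phi : Lip0 V -> R | forall e : R, 0 < e ->
     exists2 mu, @span_delta V mu & (dnorm (fun f => (phi f - mu f)%R) <= e%:E)%E].

Definition coarse_lip_embeds (X Y : normedModType R) : Prop :=
  exists (f : X -> Y) (A B C : R), 0 < A /\ 0 < B /\ 0 <= C /\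
    forall x y : X, A * `|x - y| - C <= `|f x - f y| <= B * `|x - y| + C.

Definition fspan (D : Type) (n : nat) (e : 'I_n -> D -> R) : set (D -> R) :=
  [set phi | exists c : 'I_n -> R, phi = fun f => \sum_(i < n) c i * e i f].

Definition iso_on (D1 D2 : Type) (E : set (D1 -> R)) (F : set (D2 -> R))
    (T : (D1 -> R) -> (D2 -> R)) : Prop :=
  [/\ forall (a : R) phi psi, E phi -> E psi ->
        T (fun f => a * phi f + psi f) = (fun g => a * T phi g + T psi g),
      forall phi psi, E phi -> E psi -> T phi = T psi -> phi = psi &
      T @` E = F].

Definition opnorm (D1 D2 : Type) (N1 : (D1 -> R) -> \bar R)
    (N2 : (D2 -> R) -> \bar R) (E : set (D1 -> R))
    (T : (D1 -> R) -> (D2 -> R)) : \bar R :=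
  ereal_inf (EFin @` [set C : R | 0 <= C /\
     forall phi, E phi -> (N2 (T phi) <= C%:E * N1 phi)%E]).

Definition opnorm_inv (D1 D2 : Type) (N1 : (D1 -> R) -> \bar R)
    (N2 : (D2 -> R) -> \bar R) (E : set (D1 -> R))
    (T : (D1 -> R) -> (D2 -> R)) : \bar R :=
  ereal_inf (EFin @` [set C : R | 0 <= C /\
     forall phi, E phi -> (N1 phi <= C%:E * N2 (T phi))%E]).

Definition bm_dist (D1 D2 : Type) (N1 : (D1 -> R) -> \bar R)
    (N2 : (D2 -> R) -> \bar R) (E : set (D1 -> R)) (F : set (D2 -> R)) : \bar R :=
  ereal_inf [set (opnorm N1 N2 E T * opnorm_inv N1 N2 E T)%E
            | T in [set T | iso_on E F T]].

Definition crudely_fin_rep (D1 D2 : Type)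
    (N1 : (D1 -> R) -> \bar R) (S1 : set (D1 -> R))
    (N2 : (D2 -> R) -> \bar R) (S2 : set (D2 -> R)) : Prop :=
  exists lam : R, 1 <= lam /\
    forall (n : nat) (e : 'I_n -> D1 -> R), (forall i, S1 (e i)) ->
    forall eps : R, 0 < eps ->
    exists (m : nat) (g : 'I_m -> D2 -> R), (forall j, S2 (g j)) /\
      (bm_dist N1 N2 (fspan e) (fspan g) <= (lam + eps)%:E)%E.

End LipFree.

(* Fix e_1, ..., e_n in F(X).  Finitely many test functions t_j in Lip_0(X)
   separate span{e_i}, so the coordinates of phi in span{e_i} are linear
   combinations of the values phi(t_j), hence bounded by a multiple of the norm
   of phi.  Approximate every e_i by a molecule mu_i supported on a common
   finite set S; the error is then at most half the norm for every element of
   the span.  Rescaling the coarse embedding f to x |-> (f(s x) - f 0) / s with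
   s large makes it bi-Lipschitz on S u {0}, with constants A/2 and 2B, since
   the additive constant C becomes negligible against the minimal distance in S.
   By McShane's extension theorem, pushing molecules on S forward along such a
   map distorts their dual norm by at most these constants.  Hence
   phi = sum_i c_i(phi) e_i |-> F_*(sum_i c_i(phi) mu_i) is an isomorphism onto
   a subspace of span{delta(y)} in F(Y), of norm at most 3B and with inverse of
   norm at most 4/A. *)

From mathcomp Require Import all_boot all_order all_algebra.
From mathcomp Require Import all_classical all_reals all_analysis.
From mathcomp Require Import ring lra.
Import Order.TTheory GRing.Theory Num.Theory.
Import numFieldNormedType.Exports.

Set Implicit Arguments.
Unset Strict Implicit.
Unset Printing Implicit Defensive.

Local Open Scope classical_set_scope.
Local Open Scope ring_scope.

Section DualBound.
Variables (R : realType) (V : normedModType R).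
Implicit Types (phi psi : Lip0 V -> R) (f : Lip0 V) (C D K L : R).

Definition dual_bound phi C : Prop :=
  forall f L, 0 <= L -> lip_bound (sval f) L -> `|phi f| <= C * L.

Lemma Lip0_0 f : sval f 0 = 0.
Proof. by case: (svalP f). Qed.

Lemma Lip0_bound f : exists L, 0 <= L /\ lip_bound (sval f) L.
Proof.
case: (svalP f) => _ [L fL]; exists `|L|; split => // x y.
by apply: le_trans (fL x y) _; rewrite ler_wpM2r // ler_norm.
Qed.

Lemma dual_boundW phi C D : C <= D -> dual_bound phi C -> dual_bound phi D.
Proof.
by move=> CD phiC f L L0 fL; apply: le_trans (phiC f L L0 fL) _; rewrite ler_wpM2r.
Qed.

Lemma eq_dual_bound phi psi C :
  (forall f, phi f = psi f) -> dual_bound psi C -> dual_bound phi C.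
Proof. by move=> phi_psi psiC f; rewrite phi_psi; apply: psiC. Qed.

Lemma dual_bound0 phi : dual_bound phi 0 -> forall f, phi f = 0.
Proof.
move=> phi0 f; have [L [L0 fL]] := Lip0_bound f.
by apply/normr0_eq0/eqP; rewrite eq_le normr_ge0 -(mul0r L) phi0.
Qed.

Lemma dual_boundD phi psi C D : dual_bound phi C -> dual_bound psi D ->
  dual_bound (fun f => phi f + psi f) (C + D).
Proof.
move=> phiC psiD f L L0 fL; rewrite mulrDl.
by apply: le_trans (ler_normD _ _) _; apply: lerD; [apply: phiC | apply: psiD].
Qed.

Lemma dual_boundB phi psi C D : dual_bound phi C -> dual_bound psi D ->
  dual_bound (fun f => phi f - psi f) (C + D).
Proof.
move=> phiC psiD f L L0 fL; rewrite mulrDl.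
by apply: le_trans (ler_normB _ _) _; apply: lerD; [apply: phiC | apply: psiD].
Qed.

Lemma dual_bound_sum n (c : 'I_n -> R) (G : 'I_n -> Lip0 V -> R) (D : 'I_n -> R) :
  (forall i, dual_bound (G i) (D i)) ->
  dual_bound (fun f => \sum_(i < n) c i * G i f) (\sum_(i < n) `|c i| * D i).
Proof.
move=> GD f L L0 fL; rewrite mulr_suml.
apply: le_trans (ler_norm_sum _ _ _) _; apply: ler_sum => i _.
by rewrite normrM -mulrA ler_wpM2l // GD.
Qed.

Lemma dual_bound_delta (x : V) : dual_bound (fun f => sval f x) `|x|.
Proof. by move=> f L _ fL; have := fL x 0; rewrite Lip0_0 !subr0 mulrC. Qed.

Lemma dnorm_ge0 phi : (0 <= dnorm phi)%E.
Proof. by apply/ereal_infP => _ [C [C0 _] <-]; rewrite lee_fin. Qed.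

Lemma dnorm_le phi C : 0 <= C -> dual_bound phi C -> (dnorm phi <= C%:E)%E.
Proof. by move=> C0 phiC; apply: ereal_inf_lbound; exists C. Qed.

(* The infimum defining [dnorm] is attained: a bound [C + e] for every [e > 0]
   yields the bound [C] because the inequalities are pointwise. *)
Lemma dual_bound_dnorm phi C : (dnorm phi <= C%:E)%E -> dual_bound phi C.
Proof.
move=> phiC f L L0 fL; apply/ler_addgt0Pr => e e0.
have eL0 : 0 < e / (L + 1) by rewrite divr_gt0 // ltr_wpDl.
have /ereal_inf_lt[_ [C' [_ phiC'] <-]] : (dnorm phi < (C + e / (L + 1))%:E)%E.
  by apply: le_lt_trans phiC _; rewrite lte_fin ltrDl.
rewrite lte_fin => C'lt; apply: le_trans (phiC' f L L0 fL) _.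
apply: le_trans (_ : (C + e / (L + 1)) * L <= _); first by rewrite ler_wpM2r // ltW.
rewrite mulrDl lerD2l -mulrA ger_pMr //.
by rewrite mulrC ler_pdivrMr ?ltr_wpDl // mul1r lerDl.
Qed.

(* [dnorm phi] is itself a bound, hence at most the fixed point [2 D] of
   [K |-> D + K / 2]. *)
Lemma dual_bound_absorb phi D : 0 <= D -> (exists C, dual_bound phi C) ->
  (forall K, 0 <= K -> dual_bound phi K -> dual_bound phi (D + K / 2)) ->
  dual_bound phi (2 * D).
Proof.
move=> D0 [C phiC] absorb.
have : (dnorm phi <= `|C|%:E)%E.
  by apply: dnorm_le => //; apply: dual_boundW phiC; apply: ler_norm.
have := dnorm_ge0 phi; case E : (dnorm phi) => [d| |] //; rewrite !lee_fin => d0 _.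
have phid : dual_bound phi d by apply: dual_bound_dnorm; rewrite E.
have : d <= D + d / 2.
  rewrite -lee_fin -E; apply: dnorm_le; last exact: absorb.
  by rewrite addr_ge0 ?divr_ge0.
by move=> dle; apply: dual_boundW phid; lra.
Qed.

End DualBound.

Lemma dnorm_le_pmul (R : realType) (V W : normedModType R) (phi : Lip0 V -> R)
    (psi : Lip0 W -> R) (k : R) : 0 < k ->
  (forall D, 0 <= D -> dual_bound psi D -> dual_bound phi (k * D)) ->
  (dnorm phi <= k%:E * dnorm psi)%E.
Proof.
move=> k0 phi_psi; have := dnorm_ge0 psi.
case E : (dnorm psi) => [d| |] // d0; last by rewrite gt0_muley ?lte_fin // leey.
rewrite -EFinM; apply: dnorm_le; first by rewrite mulr_ge0 // ltW.
by apply: phi_psi; [rewrite -lee_fin | apply: dual_bound_dnorm; rewrite E].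
Qed.

Section Molecules.
Variables (R : realType) (V : normedModType R).
Implicit Types (mu phi : Lip0 V -> R).

Definition delta_sum (J : finType) (c : J -> R) (x : J -> V) : Lip0 V -> R :=
  fun f => \sum_(p : J) c p * sval f (x p).

Lemma delta_sum_mix (J : finType) n (c : 'I_n -> R) (a : 'I_n -> J -> R)
    (x : J -> V) f :
  delta_sum (fun p => \sum_(i < n) c i * a i p) x f =
  \sum_(i < n) c i * delta_sum (a i) x f.
Proof.
rewrite /delta_sum; under eq_bigr do rewrite mulr_suml.
rewrite exchange_big /=; apply: eq_bigr => i _.
by rewrite mulr_sumr; apply: eq_bigr => p _; rewrite mulrA.
Qed.

Lemma dual_bound_delta_sum (J : finType) (c : J -> R) (x : J -> V) :
  dual_bound (delta_sum c x) (\sum_p `|c p| * `|x p|).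
Proof.
move=> f L L0 fL; rewrite mulr_suml.
apply: le_trans (ler_norm_sum _ _ _) _; apply: ler_sum => p _.
by rewrite normrM -mulrA ler_wpM2l // dual_bound_delta.
Qed.

Lemma span_delta_delta_sum (J : finType) (c : J -> R) (x : J -> V) :
  span_delta (delta_sum c x).
Proof.
exists #|J|, (c \o enum_val), (x \o enum_val); apply: funext => f.
by rewrite /delta_sum (big_enum_val (fun p => c p * sval f (x p))).
Qed.

Lemma span_delta_Free mu : span_delta mu -> Free mu.
Proof.
move=> mu_delta e e0; exists mu => //; apply: dnorm_le; first exact: ltW.
by move=> f L L0 _; rewrite subrr normr0 mulr_ge0 // ltW.
Qed.

Lemma Free_dual_bound phi : Free phi -> exists C, dual_bound phi C.
Proof.
move=> /(_ 1 ltr01) [_ [n [a [x ->]]] /dual_bound_dnorm phi_mu].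
exists (1 + \sum_p `|a p| * `|x p|).
have := dual_boundD phi_mu (dual_bound_delta_sum a x).
by apply: eq_dual_bound => f; rewrite subrK.
Qed.

Lemma Free_approx_common_support n (e : 'I_n -> Lip0 V -> R) (eta : R) :
  (forall i, Free (e i)) -> 0 < eta ->
  exists (J : finType) (x : J -> V) (a : 'I_n -> J -> R),
    forall i, dual_bound (fun f => e i f - delta_sum (a i) x f) eta.
Proof.
move=> eF eta0.
have /choice[mu mu_e] : forall i, exists mu : {N : nat & ('I_N -> R) * ('I_N -> V)},
    dual_bound (fun f => e i f - delta_sum (projT2 mu).1 (projT2 mu).2 f) eta.
  move=> i; have [_ [N [a [x ->]]] /dual_bound_dnorm e_mu] := eF i eta eta0.
  by exists (existT _ N (a, x)).
pose N i := projT1 (mu i).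
pose c i : 'I_(N i) -> R := (projT2 (mu i)).1.
pose y i : 'I_(N i) -> V := (projT2 (mu i)).2.
exists {i : 'I_n & 'I_(N i)}, (fun p => y (tag p) (tagged p)),
  (fun i p => if tag p == i then c (tag p) (tagged p) else 0).
move=> i; apply: eq_dual_bound (mu_e i) => f; congr (_ - _).
rewrite /delta_sum; transitivity (\sum_(j | j == i) delta_sum (c j) (y j) f).
  rewrite sig_big_dep [RHS]big_mkcond /=.
  by apply: eq_bigr => p _; rewrite andbT; case: eqP => // _; rewrite mul0r.
by rewrite big_pred1_eq.
Qed.

End Molecules.

Section McShane.
Variables (R : realType) (V : normedModType R) (J : finType).
Variables (z : J -> V) (v : J -> R) (L : R).

(* The point [0] enters with value [0] through the default term [L * `|w|]. *)
Definition mcshane (w : V) : R :=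
  \big[Num.min/(L * `|w|)]_p (v p + L * `|w - z p|).

Lemma mcshane_lip : 0 <= L -> lip_bound mcshane L.
Proof.
move=> L0.
suff le_shift w u : mcshane w - L * `|w - u| <= mcshane u.
  move=> w u; have := le_shift w u; have := le_shift u w.
  by rewrite distrC ler_norml => *; apply/andP; split; lra.
have triangle (a b c : V) : L * `|a - c| - L * `|a - b| <= L * `|b - c|.
  by rewrite lerBlDl -mulrDr ler_wpM2l // (le_trans (ler_distD b _ _)) // addrC.
apply: le_bigmin => [|p _].
  have := triangle w u 0; rewrite !subr0.
  have : mcshane w <= L * `|w| by apply: bigmin_le_id.
  lra.
have := triangle w u (z p).
have : mcshane w <= v p + L * `|w - z p| by apply: bigmin_le.
lra.
Qed.

Hypothesis v_lip : forall p q, `|v p - v q| <= L * `|z p - z q|.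
Hypothesis v_lip0 : forall p, `|v p| <= L * `|z p|.

Lemma mcshane0 : mcshane 0 = 0.
Proof.
apply/eqP; rewrite eq_le; apply/andP; split.
  by apply: le_trans (bigmin_le_id _ _ _ _) _; rewrite normr0 mulr0.
apply: le_bigmin => [|p _]; first by rewrite normr0 mulr0.
rewrite sub0r normrN -lerBlDl sub0r.
by apply: le_trans (v_lip0 p); rewrite -normrN ler_norm.
Qed.

Lemma mcshane_eq p : mcshane (z p) = v p.
Proof.
apply/eqP; rewrite eq_le; apply/andP; split.
  by apply: le_trans (bigmin_le _ p _) _; rewrite subrr normr0 mulr0 addr0.
apply: le_bigmin => [|q _]; first exact: le_trans (ler_norm _) (v_lip0 p).
by rewrite -lerBlDl; apply: le_trans (ler_norm _) (v_lip p q).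
Qed.

End McShane.

Lemma Lip0_extension (R : realType) (V : normedModType R) (J : finType)
    (z : J -> V) (v : J -> R) (L : R) : 0 <= L ->
  (forall p q, `|v p - v q| <= L * `|z p - z q|) ->
  (forall p, `|v p| <= L * `|z p|) ->
  exists2 h : Lip0 V, lip_bound (sval h) L & forall p, sval h (z p) = v p.
Proof.
move=> L0 v_lip v_lip0; have hlip := mcshane_lip z v L0.
exists (exist _ (mcshane z v L) (conj (mcshane0 v_lip0) (ex_intro _ L hlip))) => //.
exact: mcshane_eq.
Qed.

(* Lipschitz functions on the image of [y] pull back, through McShane's
   extension, to Lipschitz functions on [V] with [b] times the constant. *)
Lemma dual_bound_delta_sum_push (R : realType) (V W : normedModType R)
    (J : finType) (x : J -> V) (y : J -> W) (c : J -> R) (b K : R) : 0 <= b ->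
  (forall p q, `|y p - y q| <= b * `|x p - x q|) ->
  (forall p, `|y p| <= b * `|x p|) ->
  dual_bound (delta_sum c x) K -> dual_bound (delta_sum c y) (K * b).
Proof.
move=> b0 y_lip y_lip0 cK g L L0 gL.
have [h hL hx] : exists2 h : Lip0 V, lip_bound (sval h) (L * b) &
    forall p, sval h (x p) = sval g (y p).
  apply: Lip0_extension => [|p q|p] /=; first exact: mulr_ge0.
    by apply: le_trans (gL _ _) _; rewrite -mulrA ler_wpM2l.
  have := gL (y p) 0; rewrite Lip0_0 !subr0 => /le_trans; apply.
  by rewrite -mulrA ler_wpM2l.
have -> : delta_sum c y g = delta_sum c x h by apply: eq_bigr => p _; rewrite hx.
by rewrite -mulrA (mulrC b); apply: cK; rewrite ?mulr_ge0.
Qed.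

Lemma min_dist_gt0 (R : realType) (V : normedModType R) (J : finType) (z : J -> V) :
  exists2 d : R, 0 < d & forall p q, z p != z q -> d <= `|z p - z q|.
Proof.
exists (\big[Num.min/1]_(pq : J * J | z pq.1 != z pq.2) `|z pq.1 - z pq.2|).
  by apply: lt_bigmin => // pq; rewrite normr_gt0 subr_eq0.
by move=> p q zpq; apply: (@bigmin_le_cond _ _ _ _ (p, q)).
Qed.

(* Conjugating [f] by the dilation of ratio [s] keeps the multiplicative
   constants and divides the additive one by [s]; for [s] large, [C / s] is
   dominated by the distances in the finite family. *)
Lemma coarse_lip_rescale (R : realType) (X Y : normedModType R) (f : X -> Y)
    (A B C : R) : 0 < A -> 0 < B -> 0 <= C ->
  (forall x y, A * `|x - y| - C <= `|f x - f y| <= B * `|x - y| + C) ->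
  forall (J : finType) (z : J -> X), exists F : X -> Y, F 0 = 0 /\
    forall p q, A / 2 * `|z p - z q| <= `|F (z p) - F (z q)| <= 2 * B * `|z p - z q|.
Proof.
move=> A0 B0 C0 f_coarse J z.
have [d d0 zd] := min_dist_gt0 z.
pose m := Num.min B (A / 2).
have m0 : 0 < m by rewrite lt_min B0 divr_gt0.
pose s := C / (m * d) + 1.
have s0 : 0 < s by rewrite ltr_wpDl // divr_ge0 // ltW // mulr_gt0.
have Cs : C <= s * (m * d).
  rewrite /s mulrDl mul1r divfK ?gt_eqF ?mulr_gt0 // lerDl.
  by rewrite ltW // mulr_gt0.
exists (fun x => s^-1 *: (f (s *: x) - f 0)); split.
  by rewrite scaler0 subrr scaler0.
move=> p q; have [->|zpq] := eqVneq (z p) (z q).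
  by rewrite !subrr !normr0 !mulr0 lexx.
have dpq := zd p q zpq; set delta := `|z p - z q| in dpq *.
have Cdelta k : m <= k -> C <= s * (k * delta).
  move=> mk; apply: le_trans Cs _; apply: ler_wpM2l; first exact: ltW.
  by apply: ler_pM => //; apply: ltW.
have CB : C <= s * (B * delta) by apply: Cdelta; rewrite ge_min lexx.
have CA : C <= s * (A / 2 * delta) by apply: Cdelta; rewrite ge_min lexx orbT.
rewrite -scalerBr opprB addrA subrK normrZ ger0_norm; last by rewrite invr_ge0 ltW.
have := f_coarse (s *: z p) (s *: z q).
rewrite -scalerBr normrZ gtr0_norm // -/delta => /andP[lo hi].
set M := s^-1 * _; have NM : `|f (s *: z p) - f (s *: z q)| = s * M.
  by rewrite mulrA divff ?gt_eqF // mul1r.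
rewrite NM in lo hi; apply/andP; split; rewrite -(ler_pM2l s0); lra.
Qed.

Section EvalComb.
Variables (R : realType) (D E : Type) (m : nat) (t : 'I_m -> D) (W : 'I_m -> E -> R).

Definition eval_comb (phi : D -> R) : E -> R :=
  fun y => \sum_(j < m) phi (t j) * W j y.

Lemma eval_comb_linear (k : R) (phi psi : D -> R) :
  eval_comb (fun d => k * phi d + psi d) =
  (fun y => k * eval_comb phi y + eval_comb psi y).
Proof.
apply: funext => y; rewrite mulr_sumr -big_split.
by apply: eq_bigr => j _; rewrite mulrDl mulrA.
Qed.

Lemma eval_comb_sum n (c : 'I_n -> R) (G : 'I_n -> D -> R) :
  eval_comb (fun d => \sum_(i < n) c i * G i d) =
  (fun y => \sum_(i < n) c i * eval_comb (G i) y).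
Proof.
apply: funext => y; rewrite /eval_comb.
under eq_bigr do rewrite mulr_suml.
rewrite exchange_big /=; apply: eq_bigr => i _.
by rewrite mulr_sumr; apply: eq_bigr => j _; rewrite mulrA.
Qed.

End EvalComb.

Lemma eval_comb_mix (R : realType) (D E : Type) m n (t : 'I_m -> D)
    (P : 'I_m -> 'I_n -> R) (G : 'I_n -> E -> R) (phi : D -> R) (y : E) :
  eval_comb t (fun j y => \sum_(i < n) P j i * G i y) phi y =
  \sum_(i < n) eval_comb t P phi i * G i y.
Proof.
rewrite /eval_comb; under eq_bigr do rewrite mulr_sumr.
rewrite exchange_big /=; apply: eq_bigr => i _.
by rewrite mulr_suml; apply: eq_bigr => j _; rewrite mulrA.
Qed.

Lemma eval_comb_bound (R : realType) (V : normedModType R) (E : Type) m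
    (t : 'I_m -> Lip0 V) (Lt : 'I_m -> R) (W : 'I_m -> E -> R)
    (phi : Lip0 V -> R) (K : R) (y : E) :
  (forall j, 0 <= Lt j /\ lip_bound (sval (t j)) (Lt j)) ->
  dual_bound phi K -> `|eval_comb t W phi y| <= K * \sum_j Lt j * `|W j y|.
Proof.
move=> t_lip phiK; rewrite mulr_sumr; apply: le_trans (ler_norm_sum _ _ _) _.
apply: ler_sum => j _; have [Lt0 tL] := t_lip j.
by rewrite normrM mulrA ler_wpM2r // phiK.
Qed.

Section Coordinates.
Variables (R : realType) (D : Type) (n : nat) (e : 'I_n -> D -> R).

Definition evalmx m (t : 'I_m -> D) : 'M[R]_(n, m) := \matrix_(i, j) e i (t j).

Definition separating m (t : 'I_m -> D) : Prop :=
  forall c : 'rV[R]_n, c *m evalmx t = 0 -> forall d, \sum_i c 0 i * e i d = 0.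

Lemma separating_step m (t : 'I_m -> D) : ~ separating t ->
  exists t' : 'I_m.+1 -> D,
    (\rank (kermx (evalmx t')) < \rank (kermx (evalmx t)))%N.
Proof.
move=> /existsNP[c /not_implyP[ct /existsNP[d /eqP cd]]].
pose t' j := if unlift ord_max j is Some j' then t j' else d.
exists t'; suff : (kermx (evalmx t') < kermx (evalmx t))%MS.
  by rewrite ltmxErank => /andP[].
have ker_sub : (kermx (evalmx t') <= kermx (evalmx t))%MS.
  apply/sub_kermxP/matrixP => i j; rewrite !mxE.
  have := congr1 (fun M : 'M[R]_(n, m.+1) => M i (lift ord_max j))
    (mulmx_ker (evalmx t')).
  rewrite !mxE => h; rewrite -[RHS]h; apply: eq_bigr => k _.
  by rewrite /evalmx !mxE /t' liftK.
have c_ker : (c <= kermx (evalmx t))%MS by apply/sub_kermxP.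
have c_notker : ~~ (c <= kermx (evalmx t'))%MS.
  apply: contra cd => /sub_kermxP /(congr1 (fun M : 'M[R]_(1, m.+1) => M 0 ord_max)).
  rewrite !mxE => h; rewrite -[X in _ == X]h; apply/eqP.
  by apply: eq_bigr => k _; rewrite /evalmx !mxE /t' unlift_none.
rewrite ltmxE ker_sub /=; apply: contra c_notker => ker_sup.
exact: submx_trans c_ker ker_sup.
Qed.

Lemma exists_separating : exists m (t : 'I_m -> D), separating t.
Proof.
suff rank_ind k m (t : 'I_m -> D) : (\rank (kermx (evalmx t)) <= k)%N ->
    exists m (t : 'I_m -> D), separating t.
  exact: (rank_ind n 0%N (ffun0 (card_ord 0)) (rank_leq_row _)).
elim: k m t => [|k IH] m t rk; have [sep|nsep] := pselect (separating t).
- by exists m, t.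
- by have [t' lt] := separating_step nsep; move: (leq_trans lt rk).
- by exists m, t.
- have [t' lt] := separating_step nsep.
  by apply: (IH _ t'); rewrite -ltnS (leq_trans lt rk).
Qed.

Lemma fspan_coord : exists m (t : 'I_m -> D) (P : 'I_m -> 'I_n -> R),
  forall phi, fspan e phi -> phi = fun d => \sum_i eval_comb t P phi i * e i d.
Proof.
have [m [t sep]] := exists_separating.
exists m, t, (fun j i => pinvmx (evalmx t) j i) => _ [c ->].
pose crow : 'rV[R]_n := \row_i c i.
pose krow : 'rV[R]_n := (crow *m evalmx t) *m pinvmx (evalmx t).
have kE i : eval_comb t (fun j i => pinvmx (evalmx t) j i)
    (fun d => \sum_i c i * e i d) i = krow 0 i.
  rewrite !mxE; apply: eq_bigr => j _; congr (_ * _); rewrite !mxE.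
  by apply: eq_bigr => k _; rewrite !mxE.
have kc : (krow - crow) *m evalmx t = 0.
  by rewrite mulmxBl mulmxKpV ?submxMl // subrr.
apply: funext => d; have /eqP := sep _ kc d.
under eq_bigr do rewrite !mxE mulrBl.
rewrite sumrB subr_eq0 => /eqP <-.
by apply: eq_bigr => i _; rewrite kE mxE.
Qed.

End Coordinates.

Section SpanIsomorphism.
Variables (R : realType) (X Y : normedModType R).
Variables (n : nat) (e : 'I_n -> Lip0 X -> R).
Hypothesis e_bounded : forall i, exists C, dual_bound (e i) C.
Variables (m : nat) (t : 'I_m -> Lip0 X) (P : 'I_m -> 'I_n -> R) (Lt : 'I_m -> R).
Hypothesis e_coord :
  forall phi, fspan e phi -> phi = fun f => \sum_i eval_comb t P phi i * e i f.
Hypothesis t_lip : forall j, 0 <= Lt j /\ lip_bound (sval (t j)) (Lt j).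
Variables (J : finType) (x : J -> X) (a : 'I_n -> J -> R) (eta : R).
Hypothesis e_approx : forall i, dual_bound (fun f => e i f - delta_sum (a i) x f) eta.
Hypothesis eta0 : 0 <= eta.
Hypothesis eta_small : eta * \sum_i \sum_j Lt j * `|P j i| <= 2^-1.
Variables (F : X -> Y) (alpha beta : R).
Hypotheses (alpha0 : 0 < alpha) (beta0 : 0 < beta) (F0 : F 0 = 0).
Let z (p : option J) : X := if p is Some q then x q else 0.
Hypothesis F_bilip : forall p q,
  alpha * `|z p - z q| <= `|F (z p) - F (z q)| <= beta * `|z p - z q|.

Let B j p := \sum_i P j i * a i p.

(* With the coordinates [c_i(phi) := eval_comb t P phi i] of [phi] and the
   approximations [mu_i := delta_sum (a i) x] of [e i],
   [molecule phi = \sum_i c_i(phi) mu_i] (lemma [molecule_coord]), and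
   [transfer phi] is its push-forward along [F]. *)
Definition molecule := eval_comb t (fun j => delta_sum (B j) x).
Definition transfer := eval_comb t (fun j => delta_sum (B j) (F \o x)).

Lemma eval_comb_delta_sum (V : normedModType R) (y : J -> V) phi :
  eval_comb t (fun j => delta_sum (B j) y) phi = delta_sum (eval_comb t B phi) y.
Proof.
apply: funext => g; rewrite /eval_comb /delta_sum.
under eq_bigr do rewrite mulr_sumr.
rewrite exchange_big /=; apply: eq_bigr => p _.
by rewrite mulr_suml; apply: eq_bigr => j _; rewrite mulrA.
Qed.

Lemma transfer_span_delta phi : span_delta (transfer phi).
Proof. by rewrite /transfer eval_comb_delta_sum; apply: span_delta_delta_sum. Qed.

Lemma molecule_coord phi f :
  molecule phi f = \sum_i eval_comb t P phi i * delta_sum (a i) x f.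
Proof.
rewrite /molecule -(eval_comb_mix t P (fun i => delta_sum (a i) x)); congr eval_comb.
by apply: funext => j; apply: funext => g; rewrite delta_sum_mix.
Qed.

Lemma fspan_dual_bound phi : fspan e phi -> exists C, dual_bound phi C.
Proof.
move=> [c ->]; have [Ce eCe] := choice e_bounded.
by exists (\sum_i `|c i| * Ce i); apply: dual_bound_sum.
Qed.

Lemma molecule_approx phi K : fspan e phi -> 0 <= K -> dual_bound phi K ->
  dual_bound (fun f => phi f - molecule phi f) (K / 2).
Proof.
move=> phi_e K0 phiK.
have -> : (fun f => phi f - molecule phi f) =
    fun f => \sum_i eval_comb t P phi i * (e i f - delta_sum (a i) x f).
  apply: funext => f; rewrite molecule_coord {1}(e_coord phi_e).
  by rewrite -sumrB; apply: eq_bigr => i _; rewrite mulrBr.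
apply: dual_boundW (dual_bound_sum _ e_approx).
apply: le_trans (_ : \sum_i K * (\sum_j Lt j * `|P j i|) * eta <= _).
  by apply: ler_sum => i _; rewrite ler_wpM2r //; apply: eval_comb_bound.
by rewrite -mulr_suml -mulr_sumr -mulrA ler_wpM2l // mulrC.
Qed.

Lemma F_lip_support : (forall p q, `|F (x p) - F (x q)| <= beta * `|x p - x q|) /\
  (forall p, `|F (x p)| <= beta * `|x p|).
Proof.
split=> [p q|p]; first by have /andP[] := F_bilip (Some p) (Some q).
by have /andP[] := F_bilip (Some p) None; rewrite /= F0 !subr0.
Qed.

Lemma F_colip_support :
  (forall p q, `|x p - x q| <= alpha^-1 * `|F (x p) - F (x q)|) /\
  (forall p, `|x p| <= alpha^-1 * `|F (x p)|).
Proof.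
split=> [p q|p]; rewrite ler_pdivlMl //.
  by have /andP[] := F_bilip (Some p) (Some q).
by have /andP[] := F_bilip (Some p) None; rewrite /= F0 !subr0.
Qed.

Lemma transfer_upper phi K : fspan e phi -> 0 <= K -> dual_bound phi K ->
  dual_bound (transfer phi) (3 / 2 * beta * K).
Proof.
move=> phi_e K0 phiK.
have mol : dual_bound (delta_sum (eval_comb t B phi) x) (K + K / 2).
  rewrite -eval_comb_delta_sum.
  apply: eq_dual_bound (dual_boundB phiK (molecule_approx phi_e K0 phiK)).
  by move=> f; rewrite opprB addrC subrK.
have [F_lip F_lip0] := F_lip_support.
rewrite /transfer eval_comb_delta_sum.
apply: dual_boundW (dual_bound_delta_sum_push (ltW beta0) F_lip F_lip0 mol).
have : 0 <= beta * K by rewrite mulr_ge0 // ltW.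
lra.
Qed.

Lemma transfer_lower phi D : fspan e phi -> 0 <= D -> dual_bound (transfer phi) D ->
  dual_bound phi (2 / alpha * D).
Proof.
move=> phi_e D0 TD; rewrite -mulrA (mulrC _ D).
apply: dual_bound_absorb (fspan_dual_bound phi_e) _ => [|K K0 phiK].
  by rewrite divr_ge0 // ltW.
have [F_colip F_colip0] := F_colip_support.
rewrite /transfer eval_comb_delta_sum in TD.
have alpha_inv0 : 0 <= alpha^-1 by rewrite invr_ge0 ltW.
have := dual_bound_delta_sum_push alpha_inv0 F_colip F_colip0 TD.
rewrite -eval_comb_delta_sum => mol.
apply: eq_dual_bound (dual_boundD mol (molecule_approx phi_e K0 phiK)).
by move=> f; rewrite addrC subrK.
Qed.

Lemma transfer_fspan (c : 'I_n -> R) :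
  transfer (fun f => \sum_i c i * e i f) = fun g => \sum_i c i * transfer (e i) g.
Proof. exact: eval_comb_sum. Qed.

Lemma transfer_iso : iso_on (fspan e) (fspan (fun i => transfer (e i))) transfer.
Proof.
split.
- by move=> k phi psi _ _; apply: eval_comb_linear.
- move=> _ _ [c ->] [d ->] Tcd.
  pose chi f := \sum_i (c i - d i) * e i f.
  have chi_e : fspan e chi by exists (fun i => c i - d i).
  have Tchi : dual_bound (transfer chi) 0.
    move=> g L _ _; rewrite transfer_fspan.
    under eq_bigr do rewrite mulrBl.
    by rewrite sumrB -!(congr1 (@^~ g) (transfer_fspan _)) Tcd subrr normr0 mul0r.
  have := transfer_lower chi_e (lexx 0) Tchi; rewrite mulr0 => /dual_bound0 chi0.
  apply: funext => f; apply/eqP; rewrite -subr_eq0 -sumrB; apply/eqP.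
  by rewrite -[RHS](chi0 f); apply: eq_bigr => i _; rewrite mulrBl.
- apply/seteqP; split=> [_ [_ [c ->] <-]|_ [c ->]].
    by exists c; rewrite transfer_fspan.
  by exists (fun f => \sum_i c i * e i f); [exists c | rewrite transfer_fspan].
Qed.

Lemma bm_dist_transfer :
  (bm_dist (@dnorm R X) (@dnorm R Y) (fspan e) (fspan (fun i => transfer (e i)))
    <= (3 * beta / alpha)%:E)%E.
Proof.
set N := @dnorm R X; set M := @dnorm R Y.
apply: le_trans (_ : (opnorm N M (fspan e) transfer *
                      opnorm_inv N M (fspan e) transfer <= _)%E).
  by apply: ereal_inf_lbound; exists transfer => //; apply: transfer_iso.
have k0 : 0 < 3 / 2 * beta by rewrite mulr_gt0.
have k'0 : 0 < 2 / alpha by rewrite divr_gt0.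
have -> : 3 * beta / alpha = 3 / 2 * beta * (2 / alpha) by field; rewrite gt_eqF.
rewrite EFinM; apply: lee_pmul.
- by apply/ereal_infP => _ [C [C0 _] <-]; rewrite lee_fin.
- by apply/ereal_infP => _ [C [C0 _] <-]; rewrite lee_fin.
- apply: ereal_inf_lbound; exists (3 / 2 * beta) => //; split; first exact: ltW.
  move=> phi phi_e; apply: dnorm_le_pmul k0 _ => D D0 phiD.
  exact: transfer_upper.
- apply: ereal_inf_lbound; exists (2 / alpha) => //; split; first exact: ltW.
  move=> phi phi_e; apply: dnorm_le_pmul k'0 _ => D D0 TD.
  exact: transfer_lower.
Qed.

End SpanIsomorphism.

Theorem corollary4p10 (R : realType) (X Y : completeNormedModType R) :
  coarse_lip_embeds X Y ->
  crudely_fin_rep (@dnorm R X) (@Free R X) (@dnorm R Y) (@Free R Y).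
Proof.
move=> [f [A [B [C [A0 [B0 [C0 f_coarse]]]]]]].
exists (12 * B / A + 1); split.
  by rewrite lerDr divr_ge0 ?mulr_ge0 // ltW.
move=> n e e_Free eps eps0.
have [m [t [P e_coord]]] := fspan_coord e.
have [Lt t_lip] := choice (fun j => Lip0_bound (t j)).
pose Q := \sum_i \sum_j Lt j * `|P j i|.
have Q0 : 0 <= Q.
  by do 2![apply: sumr_ge0 => ? _]; rewrite mulr_ge0 ?(t_lip _).1.
have eta0 : 0 < (2 * Q + 1)^-1 by rewrite invr_gt0 ltr_wpDl ?mulr_ge0.
have eta_small : (2 * Q + 1)^-1 * Q <= 2^-1.
  by rewrite mulrC ler_pdivrMr ?ltr_wpDl ?mulr_ge0 //; lra.
have [J [x [a e_approx]]] := Free_approx_common_support e_Free eta0.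
have [F [F0 F_bilip]] := coarse_lip_rescale A0 B0 C0 f_coarse
  (fun p : option J => if p is Some q then x q else 0).
exists n, (fun i => transfer t P x a F (e i)); split.
  by move=> i; apply/span_delta_Free/transfer_span_delta.
apply: le_trans (bm_dist_transfer (fun i => Free_dual_bound (e_Free i)) e_coord
  t_lip e_approx (ltW eta0) eta_small
  (divr_gt0 A0 (ltr0n _ 2)) (mulr_gt0 (ltr0n _ 2) B0) F0 F_bilip) _.
rewrite lee_fin (_ : 3 * (2 * B) / (A / 2) = 12 * B / A); first lra.
by field; rewrite gt_eqF.
Qed.
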